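(* Let $\mathcal{O}$ be an operad, $A$ a color of $\mathcal{O}$, and $L\subseteq\mathcal{O}(A)$ a regular language of constants. Let $F:\mathcal{P}\to\mathcal{O}$ be a functor of operads and $R$ a color of $\mathcal{P}$ with $F(R)=A$. Then $F^{-1}(L)\cap\mathcal{P}(R)=\{c\in\mathcal{P}(R)\mid F(c)\in L\}$ is a regular language of constants in $\mathcal{P}$.
   Context: Operads are colored, non-symmetric operads; $\mathcal{O}(A)$ denotes the set of constants (nullary operations) of output color $A$. A functor of operads $p:\mathcal{Q}\to\mathcal{O}$ is ULF if for every operation $\alpha$ of $\mathcal{Q}$ and operations $g,h$ of $\mathcal{O}$ and index $i$ with $p(\alpha)=g\circ_i h$ there is a unique pair $\beta,\gamma$ with $\alpha=\beta\circ_i\gamma$, $p(\beta)=g$, $p(\gamma)=h$; it is finitary if its fibers over every color and every operation are finite. A nondeterministic finite-state automaton over $\mathcal{O}$ is a tuple $M=(\mathcal{O},\mathcal{Q},p,q_r)$ with $p:\mathcal{Q}\to\mathcal{O}$ finitary ULF and $q_r$ a color of $\mathcal{Q}$; it recognizes $\{p(\alpha)\mid\alpha\in\mathcal{Q}(q_r)\}\subseteq\mathcal{O}(p(q_r))$. A subset $L\subseteq\mathcal{O}(A)$ is a regular language of constants if it is the language recognized by such an automaton with $p(q_r)=A$. *)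

From Stdlib Require List.
From mathcomp Require Import all_boot.
Set Implicit Arguments. Unset Strict Implicit. Unset Printing Implicit Defensive.

(* Colored non-symmetric operads, presented "globally": one carrier of
   operations, each with an input list of colors [dom] and output color [cod];
   partial composition [comp g i h] = g o_i h is a total function that is
   only meaningful when [comp_def g i h] holds. *)

Definition comp_def_gen (Col Op : Type) (dom : Op -> seq Col) (cod : Op -> Col)
  (g : Op) (i : nat) (h : Op) : Prop :=
  exists G1 G2, dom g = G1 ++ cod h :: G2 /\ size G1 = i.

Record operad := Operad {
  Col : Type;
  Op : Type;
  dom : Op -> seq Col;
  cod : Op -> Col;
  oid : Col -> Op;
  comp : Op -> nat -> Op -> Op;
  dom_id : forall A, dom (oid A) = [:: A];
  cod_id : forall A, cod (oid A) = A;
  dom_comp : forall g i h, comp_def_gen dom cod g i h ->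
    dom (comp g i h) = take i (dom g) ++ dom h ++ drop i.+1 (dom g);
  cod_comp : forall g i h, comp_def_gen dom cod g i h ->
    cod (comp g i h) = cod g;
  comp_id_l : forall f, comp (oid (cod f)) 0 f = f;
  comp_id_r : forall f i A, comp_def_gen dom cod f i (oid A) ->
    comp f i (oid A) = f;
  comp_seq : forall f g h i j,
    comp_def_gen dom cod f i g -> comp_def_gen dom cod g j h ->
    comp (comp f i g) (i + j) h = comp f i (comp g j h);
  comp_par : forall f g h i k, i < k ->
    comp_def_gen dom cod f k g -> comp_def_gen dom cod f i h ->
    comp (comp f k g) i h = comp (comp f i h) (k + size (dom h) - 1) g
}.

Definition comp_def (O : operad) (g : Op O) (i : nat) (h : Op O) : Prop :=
  comp_def_gen (@dom O) (@cod O) g i h.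

Definition is_const (O : operad) (A : Col O) (c : Op O) : Prop :=
  dom c = [::] /\ cod c = A.

Record functor (Q O : operad) := Functor {
  fcol : Col Q -> Col O;
  fop : Op Q -> Op O;
  fdom : forall a, dom (fop a) = map fcol (dom a);
  fcod : forall a, cod (fop a) = fcol (cod a);
  fid : forall x, fop (oid x) = oid (fcol x);
  fcomp : forall g i h, comp_def g i h ->
    fop (comp g i h) = comp (fop g) i (fop h)
}.

Definition ULF (Q O : operad) (p : functor Q O) : Prop :=
  forall (a : Op Q) (g h : Op O) (i : nat),
    comp_def g i h -> fop p a = comp g i h ->
    exists b c, [/\ comp_def b i c, a = comp b i c, fop p b = g & fop p c = h]
      /\ forall b' c', comp_def b' i c' -> a = comp b' i c' ->
           fop p b' = g -> fop p c' = h -> b' = b /\ c' = c.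

Definition finite_pred (T : Type) (P : T -> Prop) : Prop :=
  exists s : seq T, forall x, P x -> Stdlib.Lists.List.In x s.

Definition finitary (Q O : operad) (p : functor Q O) : Prop :=
  (forall A : Col O, finite_pred (fun x : Col Q => fcol p x = A)) /\
  (forall f : Op O, finite_pred (fun a : Op Q => fop p a = f)).

(* Language recognized by the NFA (O, Q, p, qr). *)
Definition recognized (Q O : operad) (p : functor Q O) (qr : Col Q)
  (f : Op O) : Prop :=
  exists a : Op Q, is_const qr a /\ fop p a = f.

Definition regular_const (O : operad) (A : Col O) (L : Op O -> Prop) : Prop :=
  exists (Q : operad) (p : functor Q O) (qr : Col Q),
    [/\ ULF p, finitary p, fcol p qr = A &
        forall f, L f <-> recognized p qr f].

(* Every finitary ULF functor p : Q -> O pulls back along F : P -> O to a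
   finitary ULF functor into P.  Its operations are the pairs (a, b) with
   F a = p b; a factorization of a in P lifts uniquely because the
   factorization of F a lifts uniquely along p, and the fibers over a color or
   an operation x of P are copies of the fibers of p over F x.  The constants
   of color (R, q_r) of the pullback are the pairs of constants (c, b) of
   colors R and q_r with F c = p b, so the pullback automaton recognizes
   exactly the constants c of color R whose image F c lies in L. *)

From mathcomp Require Import all_boot zify.
(* Imported after all_boot so that [comp] is operadic composition, not [ssrfun.comp]. *)
From Stdlib Require Import ClassicalEpsilon ProofIrrelevance.
Set Implicit Arguments. Unset Strict Implicit. Unset Printing Implicit Defensive.

Lemma onth_drop (T : Type) (s : seq T) n m : onth (drop n s) m = onth s (n + m).
Proof. by elim: n s => [|n IHn] [|x s] //=; rewrite ?drop0 ?onth0n. Qed.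

Lemma onth_take (T : Type) (s : seq T) k n :
  onth (take k s) n = if n < k then onth s n else None.
Proof. by elim: k s n => [|k IHk] [|x s] [|n] //=; rewrite ?onth0n ?if_same. Qed.

Lemma onth_insert (T : Type) (s t : seq T) i n : i < size s ->
  onth (take i s ++ t ++ drop i.+1 s) n =
  if n < i then onth s n
  else if n < i + size t then onth t (n - i) else onth s (n - size t + 1).
Proof.
move=> lt_i; rewrite onth_cat (size_takel (ltnW lt_i)) onth_take.
case: ltnP => // le_i; rewrite onth_cat ltn_subLR // onth_drop.
by case: ltnP => // ?; congr onth; lia.
Qed.

Lemma comp_def_genP (Col Op : Type) (d : Op -> seq Col) (c : Op -> Col) g i h :
  comp_def_gen d c g i h <-> onth (d g) i = Some (c h).
Proof.
split=> [[s1 [s2 [-> <-]]] | dg_i]; first by rewrite onth_cat ltnn subnn.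
have lt_i : i < size (d g) by rewrite -onthTE dg_i.
exists (take i (d g)), (drop i.+1 (d g)); split; last exact/size_takel/ltnW.
by rewrite -{1}(cat_take_drop i (d g)) (drop_nth (c h) lt_i) (onth_nth _ _ _ _ dg_i).
Qed.

Section OperadFacts.

Variable O : operad.
Implicit Types f g h : Op O.

Lemma comp_defP g i h : comp_def g i h <-> onth (dom g) i = Some (cod h).
Proof. exact: comp_def_genP. Qed.

Lemma comp_def_size g i h : comp_def g i h -> i < size (dom g).
Proof. by move=> /comp_defP dg_i; rewrite -onthTE dg_i. Qed.

Lemma onth_dom_comp f i g n : comp_def f i g ->
  onth (dom (comp f i g)) n =
  if n < i then onth (dom f) n
  else if n < i + size (dom g) then onth (dom g) (n - i)
  else onth (dom f) (n - size (dom g) + 1).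
Proof. by move=> fig; rewrite (dom_comp fig) onth_insert ?(comp_def_size fig). Qed.

Lemma comp_def_id_l f : comp_def (oid (cod f)) 0 f.
Proof. by apply/comp_defP; rewrite dom_id. Qed.

Lemma comp_def_compl f g h i j :
  comp_def f i g -> comp_def g j h -> comp_def (comp f i g) (i + j) h.
Proof.
move=> fig gjh; apply/comp_defP; rewrite onth_dom_comp // ltnNge leq_addr /=.
by rewrite ltn_add2l (comp_def_size gjh) addKn; apply/comp_defP.
Qed.

Lemma comp_def_compr f g h i j :
  comp_def g j h -> comp_def f i g -> comp_def f i (comp g j h).
Proof. by move=> gjh; rewrite /comp_def /comp_def_gen (cod_comp gjh). Qed.

Lemma comp_def_comp_lt f g h i k : i < k ->
  comp_def f k g -> comp_def f i h -> comp_def (comp f k g) i h.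
Proof. by move=> lt_ik fkg /comp_defP fih; apply/comp_defP; rewrite onth_dom_comp ?lt_ik. Qed.

Lemma comp_def_comp_gt f g h i k : i < k ->
  comp_def f k g -> comp_def f i h -> comp_def (comp f i h) (k + size (dom h) - 1) g.
Proof.
move=> lt_ik /comp_defP fkg fih; apply/comp_defP; rewrite onth_dom_comp //.
have -> : k + size (dom h) - 1 - size (dom h) + 1 = k by lia.
by rewrite !ifN // -leqNgt; lia.
Qed.

End OperadFacts.

Lemma functor_comp_def (P O : operad) (F : functor P O) (g h : Op P) i :
  comp_def g i h -> comp_def (fop F g) i (fop F h).
Proof. by move=> /comp_defP gih; apply/comp_defP; rewrite fdom fcod onth_map gih. Qed.

Lemma In_pmap (T U : Type) (f : T -> option U) (s : seq T) x y :
  List.In x s -> f x = Some y -> List.In y (pmap f s).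
Proof.
elim: s => //= x' s IHs [<- -> | in_x fx]; first by left.
by case: (f x') => [?|]; [right|]; exact: IHs.
Qed.

Record fibprod (X Y Z : Type) (f : X -> Z) (g : Y -> Z) :=
  FibProd { fp1 : X; fp2 : Y; fp_eq : f fp1 = g fp2 }.
Arguments fp1 {X Y Z f g}.
Arguments fp2 {X Y Z f g}.
Arguments fp_eq {X Y Z f g}.

Section FiberProduct.

Variables (X Y Z : Type) (f : X -> Z) (g : Y -> Z).
Local Notation fibprod := (fibprod f g).
Implicit Types u v : fibprod.

Lemma fibprod_ext u v : fp1 u = fp1 v -> fp2 u = fp2 v -> u = v.
Proof.
case: u v => [x y e] [x' y' e'] /= ex ey; subst x' y'.
by rewrite (proof_irrelevance _ e e').
Qed.

Lemma fibprod_seq_ext (us vs : seq fibprod) :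
  map fp1 us = map fp1 vs -> map fp2 us = map fp2 vs -> us = vs.
Proof.
elim: us vs => [|u us IHus] [|v vs] //= [eu1 e1] [eu2 e2].
by rewrite (fibprod_ext eu1 eu2) (IHus _ e1 e2).
Qed.

Definition fibprod_opt x y : option fibprod :=
  match excluded_middle_informative (f x = g y) with
  | left e => Some (FibProd e)
  | right _ => None
  end.

Lemma fibprod_optE u : fibprod_opt (fp1 u) (fp2 u) = Some u.
Proof.
rewrite /fibprod_opt; case: excluded_middle_informative => [e|]; last by case: u.
by congr Some; apply: fibprod_ext.
Qed.

Definition fibprod_zip (xs : seq X) (ys : seq Y) : seq fibprod :=
  pmap (fun xy => fibprod_opt xy.1 xy.2) (zip xs ys).

Lemma fibprod_zipK xs ys : map f xs = map g ys ->
  map fp1 (fibprod_zip xs ys) = xs /\ map fp2 (fibprod_zip xs ys) = ys.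
Proof.
elim: xs ys => [|x xs IHxs] [|y ys] //= [e /IHxs [exs eys]].
have exy : fibprod_opt x y = Some (FibProd e) := fibprod_optE (FibProd e).
by rewrite /fibprod_zip /= exy /= -/(fibprod_zip xs ys) exs eys.
Qed.

Lemma finite_fibers_fp1 : (forall z, finite_pred (fun y => g y = z)) ->
  forall x, finite_pred (fun u => fp1 u = x).
Proof.
move=> fin_g x; have [ys in_ys] := fin_g (f x).
exists (pmap (fibprod_opt x) ys) => u ux.
have /in_ys in_u : g (fp2 u) = f x by rewrite -ux fp_eq.
by apply: (In_pmap in_u); rewrite -ux fibprod_optE.
Qed.

End FiberProduct.

Section Pullback.

Variables (P Q O : operad) (F : functor P O) (p : functor Q O).

Local Notation pb_col := (fibprod (fcol F) (fcol p)).
Local Notation pb_op := (fibprod (fop F) (fop p)).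
Implicit Types (x : pb_col) (a f g h : pb_op).

Lemma map_dom_fp_eq a : map (fcol F) (dom (fp1 a)) = map (fcol p) (dom (fp2 a)).
Proof. by rewrite -!fdom fp_eq. Qed.

Definition pb_dom a : seq pb_col := fibprod_zip (fcol F) (fcol p) (dom (fp1 a)) (dom (fp2 a)).

Lemma pb_dom_fp1 a : map fp1 (pb_dom a) = dom (fp1 a).
Proof. by have [] := fibprod_zipK (map_dom_fp_eq a). Qed.

Lemma pb_dom_fp2 a : map fp2 (pb_dom a) = dom (fp2 a).
Proof. by have [] := fibprod_zipK (map_dom_fp_eq a). Qed.

Lemma cod_fp_eq a : fcol F (cod (fp1 a)) = fcol p (cod (fp2 a)).
Proof. by rewrite -!fcod fp_eq. Qed.

Definition pb_cod a : pb_col := FibProd (cod_fp_eq a).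

Lemma oid_fp_eq x : fop F (oid (fp1 x)) = fop p (oid (fp2 x)).
Proof. by rewrite !fid fp_eq. Qed.

Definition pb_id x : pb_op := FibProd (oid_fp_eq x).

(* [g] is a junk value, never reached when [pb_def g i h] holds (see [pb_compE]). *)
Definition pb_comp g i h : pb_op :=
  odflt g (fibprod_opt (fop F) (fop p) (comp (fp1 g) i (fp1 h)) (comp (fp2 g) i (fp2 h))).

Definition pb_def g i h := comp_def (fp1 g) i (fp1 h) /\ comp_def (fp2 g) i (fp2 h).

Lemma pb_defP g i h : comp_def_gen pb_dom pb_cod g i h <-> pb_def g i h.
Proof.
split=> [/comp_def_genP g_i | [/comp_defP g1_i /comp_defP g2_i]].
  by split; apply/comp_defP; rewrite -?pb_dom_fp1 -?pb_dom_fp2 onth_map g_i.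
apply/comp_def_genP; move: g1_i g2_i.
rewrite -pb_dom_fp1 -pb_dom_fp2 !onth_map; case: onth => [u|] //= [u1] [u2].
by rewrite (fibprod_ext (v := pb_cod h) u1 u2).
Qed.

Lemma comp_fp_eq g i h : pb_def g i h ->
  fop F (comp (fp1 g) i (fp1 h)) = fop p (comp (fp2 g) i (fp2 h)).
Proof. by case=> g1_i g2_i; rewrite !fcomp // !fp_eq. Qed.

Lemma pb_compE g i h (gih : pb_def g i h) : pb_comp g i h = FibProd (comp_fp_eq gih).
Proof. by rewrite /pb_comp (fibprod_optE (FibProd (comp_fp_eq gih))). Qed.

Lemma size_pb_dom_fp1 h : size (pb_dom h) = size (dom (fp1 h)).
Proof. by rewrite -pb_dom_fp1 size_map. Qed.

Lemma size_pb_dom_fp2 h : size (pb_dom h) = size (dom (fp2 h)).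
Proof. by rewrite -pb_dom_fp2 size_map. Qed.

Lemma pb_def_compl f g h i j :
  pb_def f i g -> pb_def g j h -> pb_def (pb_comp f i g) (i + j) h.
Proof.
move=> fig [g1_j g2_j]; rewrite (pb_compE fig).
by case: fig => f1_i f2_i; split; exact: comp_def_compl.
Qed.

Lemma pb_def_compr f g h i j :
  pb_def g j h -> pb_def f i g -> pb_def f i (pb_comp g j h).
Proof.
move=> gjh [f1_i f2_i]; rewrite (pb_compE gjh).
by case: gjh => g1_j g2_j; split; exact: comp_def_compr.
Qed.

Lemma pb_def_comp_lt f g h i k : i < k ->
  pb_def f k g -> pb_def f i h -> pb_def (pb_comp f k g) i h.
Proof.
move=> lt_ik fkg [f1_i f2_i]; rewrite (pb_compE fkg).
by case: fkg => f1_k f2_k; split; exact: comp_def_comp_lt.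
Qed.

Lemma pb_def_comp_gt f g h i k : i < k ->
  pb_def f k g -> pb_def f i h -> pb_def (pb_comp f i h) (k + size (pb_dom h) - 1) g.
Proof.
move=> lt_ik [f1_k f2_k] fih; rewrite (pb_compE fih).
case: fih => f1_i f2_i; split.
- by rewrite size_pb_dom_fp1; exact: comp_def_comp_gt.
- by rewrite size_pb_dom_fp2; exact: comp_def_comp_gt.
Qed.

Lemma pb_dom_id x : pb_dom (pb_id x) = [:: x].
Proof. by apply: fibprod_seq_ext; rewrite ?pb_dom_fp1 ?pb_dom_fp2 /= dom_id. Qed.

Lemma pb_cod_id x : pb_cod (pb_id x) = x.
Proof. by apply: fibprod_ext; exact: cod_id. Qed.

Lemma pb_dom_comp g i h : comp_def_gen pb_dom pb_cod g i h ->
  pb_dom (pb_comp g i h) = take i (pb_dom g) ++ pb_dom h ++ drop i.+1 (pb_dom g).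
Proof.
move=> /pb_defP gih; rewrite (pb_compE gih); case: gih => g1_i g2_i.
apply: fibprod_seq_ext; rewrite !map_cat map_take map_drop.
- by rewrite !pb_dom_fp1 (dom_comp g1_i).
- by rewrite !pb_dom_fp2 (dom_comp g2_i).
Qed.

Lemma pb_cod_comp g i h : comp_def_gen pb_dom pb_cod g i h -> pb_cod (pb_comp g i h) = pb_cod g.
Proof.
move=> /pb_defP gih; rewrite (pb_compE gih); case: gih => g1_i g2_i.
by apply: fibprod_ext; exact: cod_comp.
Qed.

Lemma pb_comp_id_l f : pb_comp (pb_id (pb_cod f)) 0 f = f.
Proof.
have idf : pb_def (pb_id (pb_cod f)) 0 f by split; exact: comp_def_id_l.
by rewrite (pb_compE idf); apply: fibprod_ext; exact: comp_id_l.
Qed.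

Lemma pb_comp_id_r f i x : comp_def_gen pb_dom pb_cod f i (pb_id x) -> pb_comp f i (pb_id x) = f.
Proof.
move=> /pb_defP f_id; rewrite (pb_compE f_id); case: f_id => f1_i f2_i.
by apply: fibprod_ext; exact: comp_id_r.
Qed.

Lemma pb_comp_seq f g h i j :
  comp_def_gen pb_dom pb_cod f i g -> comp_def_gen pb_dom pb_cod g j h ->
  pb_comp (pb_comp f i g) (i + j) h = pb_comp f i (pb_comp g j h).
Proof.
move=> /pb_defP fig /pb_defP gjh.
rewrite (pb_compE (pb_def_compl fig gjh)) (pb_compE (pb_def_compr gjh fig)).
apply: fibprod_ext; rewrite /= (pb_compE fig) (pb_compE gjh).
all: case: fig gjh => [f1_i f2_i] [g1_j g2_j]; exact: comp_seq.
Qed.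

Lemma pb_comp_par f g h i k : i < k ->
  comp_def_gen pb_dom pb_cod f k g -> comp_def_gen pb_dom pb_cod f i h ->
  pb_comp (pb_comp f k g) i h = pb_comp (pb_comp f i h) (k + size (pb_dom h) - 1) g.
Proof.
move=> lt_ik /pb_defP fkg /pb_defP fih.
rewrite (pb_compE (pb_def_comp_lt lt_ik fkg fih)) (pb_compE (pb_def_comp_gt lt_ik fkg fih)).
apply: fibprod_ext; rewrite /= (pb_compE fkg) (pb_compE fih).
all: case: fkg fih => [f1_k f2_k] [f1_i f2_i].
- by rewrite size_pb_dom_fp1; exact: comp_par.
- by rewrite size_pb_dom_fp2; exact: comp_par.
Qed.

Definition pullback : operad :=
  Operad pb_dom_id pb_cod_id pb_dom_comp pb_cod_comp
    pb_comp_id_l pb_comp_id_r pb_comp_seq pb_comp_par.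

Lemma pullback_proj_dom (a : Op pullback) : dom (fp1 a) = map fp1 (dom a).
Proof. by rewrite pb_dom_fp1. Qed.

Lemma pullback_proj_comp (g : Op pullback) i h :
  comp_def g i h -> fp1 (comp g i h) = comp (fp1 g) i (fp1 h).
Proof. by move=> /pb_defP gih; rewrite /= (pb_compE gih). Qed.

Definition pullback_proj : functor pullback P :=
  Functor pullback_proj_dom (fun a => erefl) (fun x => erefl) pullback_proj_comp.

Lemma pullback_proj_ULF : ULF p -> ULF pullback_proj.
Proof.
move=> ulf_p a g h i gih a_gh.
have a2_Fgh : fop p (fp2 a) = comp (fop F g) i (fop F h) by rewrite -fp_eq -fcomp // -a_gh.
have [b2 [c2 [[bc2 a2_bc b2_g c2_h] uniq2]]] := ulf_p _ _ _ _ (functor_comp_def F gih) a2_Fgh.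
pose b : Op pullback := FibProd (esym b2_g); pose c : Op pullback := FibProd (esym c2_h).
have bic : pb_def b i c by split.
exists b, c; split.
  split=> //; first exact/pb_defP.
  by apply: fibprod_ext; rewrite /= (pb_compE bic).
move=> b' c' /pb_defP bic' a_bc' b'_g c'_h.
have a2_bc' : fp2 a = comp (fp2 b') i (fp2 c') by rewrite a_bc' /= (pb_compE bic').
have b'2_g : fop p (fp2 b') = fop F g by rewrite -fp_eq -b'_g.
have c'2_h : fop p (fp2 c') = fop F h by rewrite -fp_eq -c'_h.
have [b'2 c'2] := uniq2 _ _ (proj2 bic') a2_bc' b'2_g c'2_h.
by split; apply: fibprod_ext.
Qed.

Lemma pullback_proj_finitary : finitary p -> finitary pullback_proj.
Proof.
case=> fin_col fin_op.
split=> y.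
- exact: (finite_fibers_fp1 (fcol F) fin_col y).
- exact: (finite_fibers_fp1 (fop F) fin_op y).
Qed.

Lemma recognized_pullback_proj (x : Col pullback) c :
  recognized pullback_proj x c <-> is_const (fp1 x) c /\ recognized p (fp2 x) (fop F c).
Proof.
split=> [[a [[dom_a cod_a] <-]] | [[dom_c cod_c] [b [[dom_b cod_b] b_c]]]].
  change (pb_dom a = [::]) in dom_a; change (pb_cod a = x) in cod_a.
  split; first by split; rewrite /= -?pb_dom_fp1 ?dom_a -?cod_a.
  exists (fp2 a); split; last exact: esym (fp_eq a).
  by split; rewrite -?pb_dom_fp2 ?dom_a -?cod_a.
exists (FibProd (esym b_c)); do ![split] => /=.
  by apply: fibprod_seq_ext; rewrite ?pb_dom_fp1 ?pb_dom_fp2 /= ?dom_c ?dom_b.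
by apply: fibprod_ext; rewrite /= ?cod_c ?cod_b.
Qed.

End Pullback.

Theorem mainTheorem9 (O P : operad) (A : Col O) (L : Op O -> Prop)
  (F : functor P O) (R : Col P) :
  regular_const A L -> fcol F R = A ->
  regular_const R (fun c : Op P => is_const R c /\ L (fop F c)).
Proof.
move=> [Q [p [qr [ulf_p fin_p p_qr L_rec]]]] F_R.
have R_qr : fcol F R = fcol p qr by rewrite F_R p_qr.
exists (pullback F p), (pullback_proj F p), (FibProd R_qr); split=> //.
- exact: pullback_proj_ULF.
- exact: pullback_proj_finitary.
move=> c; split=> [[c_R /L_rec Fc_rec] | /recognized_pullback_proj [c_R /L_rec Fc_L]].
- exact/recognized_pullback_proj.
- by split.
Qed.
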